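(* Let $(X,d)$ be a compact metric space and $f_{0,\infty}=\{f_n\}_{n=0}^\infty$ a sequence of continuous self-maps of $X$. Let $N\ge2$ and let $V_1,\dots,V_N$ be nonempty, closed, mutually disjoint subsets of $X$ such that \[f_n(V_i)\supset\bigcup_{j=1}^{N}V_j\quad\text{for all }1\le i\le N,\ n\ge0.\] Then $h_A(f_{0,\infty})\geq\log N$ for every $A\in\mathcal{S}$.
   Context: $f_i^n=f_{i+n-1}\circ\cdots\circ f_i$ ($n\ge1$), $f_i^0=\mathrm{id}$, $f_i^{-n}(B)=(f_i^n)^{-1}(B)$. $\mathcal S$ is the set of strictly increasing sequences $A=\{a_i\}_{i\ge1}$ of nonnegative integers. For finite open covers, $\bigvee_{i=1}^n\mathscr A_i=\{\bigcap_i U_i:U_i\in\mathscr A_i\}$, $f_0^{-a}\mathscr A=\{f_0^{-a}(U):U\in\mathscr A\}$, $\mathcal N(\cdot)$ is the minimal cardinality of a subcover, and $h_A(f_{0,\infty})=\sup_{\mathscr A}\limsup_{n\to\infty}\frac1n\log\mathcal N(\bigvee_{i=1}^n f_0^{-a_i}\mathscr A)$ over finite open covers $\mathscr A$ of $X$. $\log$ is the natural logarithm. *)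

From HB Require Import structures.
From mathcomp Require Import all_boot all_order all_algebra.
From mathcomp Require Import all_classical all_reals all_analysis.
Set Implicit Arguments. Unset Strict Implicit. Unset Printing Implicit Defensive.
Import Order.TTheory GRing.Theory Num.Theory.
Local Open Scope classical_set_scope.
Local Open Scope ring_scope.

Section Defs.
Context {X : Type}.

Fixpoint nonaut_iter (f : nat -> X -> X) (i n : nat) : X -> X :=
  match n with
  | 0 => id
  | n'.+1 => f (i + n')%N \o nonaut_iter f i n'
  end.

Definition seq_join (f : nat -> X -> X) (a : nat -> nat) (C : set (set X)) (n : nat)
  : set (set X) :=
  [set W | exists g : 'I_n -> set X,
      (forall i, C (g i)) /\ W = \bigcap_(i in [set: 'I_n]) (nonaut_iter f 0 (a i) @^-1` g i)].

Definition has_subcover_card (D : set (set X)) (k : nat) : Prop :=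
  exists g : 'I_k -> set X, (forall i, D (g i)) /\ \bigcup_(i in [set: 'I_k]) g i = setT.

Definition min_subcover (D : set (set X)) : nat :=
  xget 0%N [set k | has_subcover_card D k /\ forall m, has_subcover_card D m -> (k <= m)%N].

End Defs.

Definition finite_open_cover {X : topologicalType} (C : set (set X)) : Prop :=
  finite_set C /\ (forall U, C U -> open U) /\ \bigcup_(U in C) U = setT.

Definition seq_entropy {R : realType} {X : topologicalType}
  (f : nat -> X -> X) (a : nat -> nat) : \bar R :=
  ereal_sup [set limn_esup (fun n : nat =>
                 ((n%:R)^-1 * ln ((min_subcover (seq_join f a C n))%:R) : R)%:E)
            | C in @finite_open_cover X].

From HB Require Import structures.
From mathcomp Require Import all_boot all_order all_algebra.
From mathcomp Require Import all_classical all_reals all_analysis.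
Set Implicit Arguments. Unset Strict Implicit. Unset Printing Implicit Defensive.
Import Order.TTheory GRing.Theory Num.Theory.
Local Open Scope classical_set_scope.
Local Open Scope ring_scope.

(* The sets [cell V k = X \ U_{j <> k} V_j] form a finite open cover of X, and a
   point of [V_j] lies in no cell but [cell V j].  Since every [f_n] maps each
   [V_i] onto a superset of [U_j V_j], every word [w] of length [n] over
   [{1..N}] is realised by a point [x_w] with [f_0^{a_i} x_w] in [V_{w_i}].
   Two such points with different words lie in different members of the join
   of the [f_0^{-a_i}] cells, so every subcover of that join has at least
   [N^n] members, and [(1/n) log N^n = log N]. *)

Lemma nonaut_iterS {X : Type} (f : nat -> X -> X) i m x :
  nonaut_iter f i m.+1 x = nonaut_iter f i.+1 m (f i x).
Proof.
elim: m => [|m IHm]; first by rewrite /= addn0.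
rewrite -[LHS]/(f (i + m.+1)%N (nonaut_iter f i m.+1 x)) IHm.
by rewrite /= addnS addSn.
Qed.

Lemma min_subcover_ge {X : Type} (D : set (set X)) (k L : nat) :
  has_subcover_card D k -> (forall m, has_subcover_card D m -> (L <= m)%N) ->
  (L <= min_subcover D)%N.
Proof.
move=> Dk Dge.
have ex_k : exists k, `[< has_subcover_card D k >] by exists k; apply/asboolP.
have [m /asboolP Dm m_min] := ex_minnP ex_k.
have [/Dge //] : [set k | has_subcover_card D k /\
    forall m, has_subcover_card D m -> (k <= m)%N] (min_subcover D).
apply: xgetPex; exists m; split => // m' Dm'; exact/m_min/asboolP.
Qed.

Section Join.
Variables (X : Type) (f : nat -> X -> X) (a : nat -> nat) (N : nat).
Implicit Types (U V : 'I_N -> set X) (n : nat).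

Lemma seq_join_range_subcover U n : (forall x, exists k, U k x) ->
  has_subcover_card (seq_join f a (range U) n) #|{ffun 'I_n -> 'I_N}|.
Proof.
move=> U_cover; pose word (j : 'I_#|{ffun 'I_n -> 'I_N}|) := enum_val j.
exists (fun j => \bigcap_(i in [set: 'I_n])
  (nonaut_iter f 0 (a i) @^-1` U (word j i))); split.
  by move=> j; exists (fun i => U (word j i)); split => // i; exists (word j i).
have cellP y : {k | U k y} by apply: cid; exact: U_cover.
apply/seteqP; split => x // _.
pose w := [ffun i : 'I_n => sval (cellP (nonaut_iter f 0 (a i) x))].
exists (enum_rank w) => //; rewrite /word enum_rankK => i _ /=.
by rewrite ffunE; exact: (svalP (cellP _)).
Qed.

Lemma seq_join_range_itinerary_eq U V n W x x' (w w' : 'I_n -> 'I_N) :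
  (forall j k y, V j y -> U k y -> j = k) ->
  seq_join f a (range U) n W -> W x -> W x' ->
  (forall i, V (w i) (nonaut_iter f 0 (a i) x)) ->
  (forall i, V (w' i) (nonaut_iter f 0 (a i) x')) -> w =1 w'.
Proof.
move=> UV [g [gU ->]] Wx Wx' Vx Vx' i.
have [k _ Uk] := gU i.
have := Wx i I; have := Wx' i I; rewrite -Uk /= => U'k Uk'.
by rewrite (UV _ _ _ (Vx i) Uk') (UV _ _ _ (Vx' i) U'k).
Qed.

End Join.

Section Itineraries.
Variables (X : Type) (f : nat -> X -> X) (N : nat) (V : 'I_N -> set X).
Hypothesis V_neq0 : forall i, V i !=set0.
Hypothesis f_V_cover : forall i n, \bigcup_(j in [set: 'I_N]) V j `<=` f n @` V i.

Lemma itinerary_prefix (s : nat -> 'I_N) M i :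
  exists x, forall m, (m <= M)%N -> V (s (i + m)%N) (nonaut_iter f i m x).
Proof.
elim: M i => [|M IHM] i.
  have [x Vx] := V_neq0 (s i); exists x => m; rewrite leqn0 => /eqP ->.
  by rewrite addn0.
have [y Vy] := IHM i.+1.
have /(f_V_cover (s i) i) [x Vx fxy] : (\bigcup_(j in [set: 'I_N]) V j) y.
  by exists (s i.+1) => //; have := Vy 0%N isT; rewrite addn0.
exists x => -[_|m m_le]; first by rewrite addn0.
by rewrite nonaut_iterS fxy addnS -addSn; apply: Vy.
Qed.

Lemma itinerary_word (a : nat -> nat) n (w : 'I_n -> 'I_N) :
  (0 < N)%N -> injective a ->
  exists x, forall i : 'I_n, V (w i) (nonaut_iter f 0 (a i) x).
Proof.
move=> N_gt0 a_inj.
pose s m := if [pick i : 'I_n | a i == m] is Some i then w i else Ordinal N_gt0.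
have [x Vx] := itinerary_prefix s (\max_(i < n) a i) 0.
exists x => i; have := Vx (a i) (leq_bigmax_cond i isT).
rewrite add0n /s; case: pickP => [j /eqP/a_inj/val_inj -> //|/(_ i)].
by rewrite eqxx.
Qed.

Lemma seq_join_range_subcover_ge (U : 'I_N -> set X) (a : nat -> nat) n k :
  (0 < N)%N -> injective a -> (forall j k x, V j x -> U k x -> j = k) ->
  has_subcover_card (seq_join f a (range U) n) k -> (N ^ n <= k)%N.
Proof.
move=> N_gt0 a_inj UV [g [gD g_cover]].
have pointP (w : {ffun 'I_n -> 'I_N}) :
    {x | forall i, V (w i) (nonaut_iter f 0 (a i) x)}.
  exact/cid/itinerary_word.
have memberP x : {j : 'I_k | g j x}.
  by apply: cid; have : setT x by []; rewrite -g_cover => -[j _ gj]; exists j.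
pose member w := sval (memberP (sval (pointP w))).
suff /leq_card : injective member by rewrite card_ffun !card_ord.
move=> w w' eq_ww'; apply/ffunP.
apply: (seq_join_range_itinerary_eq UV (gD (member w)) _ _
  (svalP (pointP w)) (svalP (pointP w'))).
- exact: (svalP (memberP _)).
- by rewrite eq_ww'; exact: (svalP (memberP _)).
Qed.

End Itineraries.

Section Cells.
Variables (X : topologicalType) (N : nat) (V : 'I_N -> set X).

Definition cell (k : 'I_N) : set X := [set x | forall j, j != k -> ~ V j x].

Lemma cell_V j k x : V j x -> cell k x -> j = k.
Proof. by move=> Vjx kx; apply/eqP/negPn/negP => /kx. Qed.

Lemma cell_cover : (0 < N)%N -> (forall i j, i != j -> V i `&` V j = set0) ->
  forall x, exists k, cell k x.
Proof.
move=> N_gt0 V_disj x; have [[j Vjx]|noV] := pselect (exists j, V j x).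
  exists j => i /V_disj ij0 Vix.
  by have : (V i `&` V j) x by []; rewrite ij0.
by exists (Ordinal N_gt0) => j _ Vjx; apply: noV; exists j.
Qed.

Lemma open_cell k : (forall i, closed (V i)) -> open (cell k).
Proof.
move=> V_closed.
have -> : cell k = ~` \bigcup_(j in [set j | j != k]) V j.
  apply/seteqP; split => x /=; first by move=> kx [j /= jk]; exact: kx.
  by move=> noV j jk Vjx; apply: noV; exists j.
by rewrite openC; apply: closed_bigcup => //; exact: finite_finset.
Qed.

Lemma finite_open_cover_cells : (0 < N)%N -> (forall i, closed (V i)) ->
  (forall i j, i != j -> V i `&` V j = set0) -> finite_open_cover (range cell).
Proof.
move=> N_gt0 V_closed V_disj; split; first exact: finite_image finite_finset.
split; first by move=> _ [k _ <-]; exact: open_cell.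
apply/seteqP; split => x // _.
by have [k kx] := cell_cover N_gt0 V_disj x; exists (cell k) => //; exists k.
Qed.

End Cells.

Lemma limn_esup_ge (R : realType) (u : (\bar R)^nat) (l : \bar R) :
  (\forall n \near \oo, (l <= u n)%E) -> (l <= limn_esup u)%E.
Proof.
move=> lu; rewrite limn_esup_lim; apply: lime_ge; first exact: is_cvg_esups.
apply: filterS lu => n lun; apply: le_trans lun _.
by apply: ereal_sup_ubound; exists n => /=.
Qed.

Lemma ln_le_invn_mul_ln (R : realType) (N n k : nat) : (0 < N)%N -> (0 < n)%N ->
  (N ^ n <= k)%N -> ln (N%:R : R) <= n%:R^-1 * ln k%:R.
Proof.
move=> N_gt0 n_gt0 Nn_le_k.
have k_gt0 : (0 < k)%N by apply: leq_trans Nn_le_k; rewrite expn_gt0 N_gt0.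
rewrite ler_pdivlMl ?ltr0n // mulr_natl -lnXn ?ltr0n //.
by rewrite ler_ln ?posrE ?exprn_gt0 ?ltr0n // -natrX ler_nat.
Qed.

Theorem theorem3p4 (R : realType) (X : metricType R) (f : nat -> X -> X)
  (N : nat) (V : 'I_N -> set X) (a : nat -> nat) :
  compact [set: X] ->
  (forall n, continuous (f n)) ->
  (2 <= N)%N ->
  (forall i, V i !=set0) ->
  (forall i, closed (V i)) ->
  (forall i j, i != j -> V i `&` V j = set0) ->
  (forall i n, \bigcup_(j in [set: 'I_N]) V j `<=` f n @` V i) ->
  (forall i j, (i < j)%N -> (a i < a j)%N) ->
  ((ln (N%:R : R))%:E <= seq_entropy f a)%E.
Proof.
move=> _ _ N_ge2 V_neq0 V_closed V_disj f_V_cover a_incr.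
have N_gt0 : (0 < N)%N by apply: leq_trans N_ge2.
have a_inj : injective a by apply/incn_inj/leq_mono => i j; exact: a_incr.
apply: le_trans (ereal_sup_ubound _); last first.
  by exists (range (cell V)); first exact: finite_open_cover_cells.
apply: limn_esup_ge; exists 1%N => // n /= n_gt0; rewrite lee_fin.
apply: ln_le_invn_mul_ln => //.
apply: min_subcover_ge (seq_join_range_subcover f a n (cell_cover N_gt0 V_disj)) _.
move=> k; exact: (@seq_join_range_subcover_ge _ _ _ _ V_neq0 f_V_cover _ _ n k
  N_gt0 a_inj (@cell_V _ _ V)).
Qed.
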